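(* If $\{x_1:A_1,\dots,x_n:A_n\}\vdash M:B$ is derivable in $\lambda$A, then for every $\lambda$A-frame $(\mathcal W,\rhd)$, every $p\in\mathcal W$, every hereditary type environment $\eta$ and every individual environment $\rho$ with $\rho(x_i)\in\mathcal I[A_i]^\eta_p$ for all $i=1,\dots,n$, we have $[\![M]\!]_\rho\in\mathcal I[B]^\eta_p$.
   Context: Type expressions: fix a countably infinite set of type variables $X,Y,Z,\dots$. Pseudo type expressions are generated by $A::=X\mid A\to A\mid \bullet A\mid \mu X.A$ ($\mu$ binds $X$; $\alpha$-convertible expressions are identified; $\to$ associates to the right; $\bullet$ binds tighter than $\to$, which binds tighter than $\mu$). $A[B/X]$ denotes capture-avoiding substitution. $\top$ abbreviates $\mu X.\bullet X$, and $\bullet^n A$ denotes $A$ prefixed by $n$ copies of $\bullet$. The tail $t(A)$ is defined by $t(X)=X$, $t(A\to B)=t(B)$, $t(\bullet A)=\bullet t(A)$, $t(\mu X.A)=\mu X.t(A)$; it always has the form $\bullet^{m_0}\mu X_1.\bullet^{m_1}\mu X_2.\cdots\mu X_n.\bullet^{m_n}Y$. $A$ is a $\top$-variant iff $Y=X_i$ for some $1\le i\le n$ with $X_i\notin\{X_{i+1},\dots,X_n\}$ and $m_i+\dots+m_n\ge 1$. $A$ is proper in $X$ iff: a variable $Y$ is proper in $X$ iff $Y\neq X$; $\bullet A$ is always proper in $X$; $A\to B$ is proper in $X$ iff both $A,B$ are proper in $X$ or $B$ is a $\top$-variant; for $Y\ne X$, $\mu Y.A$ is proper in $X$ iff $A$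 is proper in $X$ or $\mu Y.A$ is a $\top$-variant. Type expressions are the least set of pseudo type expressions containing all type variables, closed under $\to$ and $\bullet$, and containing $\mu X.A$ whenever it contains $A$ and $A$ is proper in $X$. Equality: $\cong$ is the least relation on type expressions such that: $A\cong A$; $A\cong B$ implies $B\cong A$; $A\cong B$ and $B\cong C$ imply $A\cong C$; $A\cong B$ implies $\bullet A\cong\bullet B$; $A\cong C$ and $B\cong D$ imply $A\to B\cong C\to D$; $A\to\top\cong\top$; $\mu X.A\cong A[\mu X.A/X]$; and if $A\cong C[A/X]$ with $C$ proper in $X$, then $A\cong\mu X.C$. $\simeq$ is the least relation satisfying the same closure conditions and additionally $\bullet(A\to B)\simeq\bullet A\to\bullet B$. Subtyping: a subtyping assumption $\gamma$ is a finite set of pairs $X\preceq Y$ of type variables in which each type variable occurs at most once; $FTV(\gamma)$ is the set of variables occurring in it. Judgments $\gamma\vdash A\preceq B$ are derived by the rules: $\gamma\cup\{X\preceq Y\}\vdash X\preceq Y$; $\gamma\vdash A\preceq\top$; from $A\simeq B$ infer $\gamma\vdash A\preceq B$; from $\gamma_1\vdash A\preceq B$ and $\gamma_2\vdash B\preceq C$ infer $\gamma_1\cup\gamma_2\vdash A\preceq C$; from $\gamma\vdash A\preceq B$ infer $\gamma\vdash\bullet A\preceq\bullet B$; from $\gamma_1\vdash A'\preceq A$ and $\gamma_2\vdash B\preceq B'$ infer $\gamma_1\cup\gamma_2\vdash A\to B\preceq A'\to B'$; from $\gamma\cup\{X\preceq Y\}\vdash A\preceq B$ infer $\gamma\vdash\mu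 X.A\preceq\mu Y.B$, provided $X\notin FTV(\gamma)\cup FTV(B)$, $Y\notin FTV(\gamma)\cup FTV(A)$, $A$ is proper in $X$ and $B$ is proper in $Y$; and $\gamma\vdash A\preceq\bullet A$. All sets $\gamma\cup\{X\preceq Y\}$, $\gamma_1\cup\gamma_2$ must be well-formed subtyping assumptions. $A\preceq B$ means $\{\}\vdash A\preceq B$ is derivable. Typing system $\lambda$A: untyped $\lambda$-terms $M::=x\mid\lambda x.M\mid MM$ (identified up to $\alpha$-conversion). A typing context $\Gamma$ is a finite map from individual variables to type expressions, written $\{x_1:A_1,\dots,x_n:A_n\}$; $\bullet\Gamma$ is $\{x_1:\bullet A_1,\dots,x_n:\bullet A_n\}$; unions of contexts must be well-formed (a variable receives at most one type). Rules: (var) $\Gamma\cup\{x:A\}\vdash x:A$; (shift) from $\bullet\Gamma\vdash M:\bullet A$ infer $\Gamma\vdash M:A$; ($\top$) $\Gamma\vdash M:\top$; ($\preceq$) from $\Gamma\vdash M:A$ and $A\preceq B$ infer $\Gamma\vdash M:B$; ($\to$I) from $\Gamma\cup\{x:A\}\vdash M:B$ infer $\Gamma\vdash\lambda x.M:A\to B$; ($\to$E) from $\Gamma_1\vdash M:A\to B$ and $\Gamma_2\vdash N:A$ infer $\Gamma_1\cup\Gamma_2\vdash MN:B$. Semantics: a syntactical $\lambda$-algebra $(\mathcal V,\cdot,[\![-]\!])$ consists of a nonempty set $\mathcal V$, a map $\cdot:\mathcal V\times\mathcal V\to\mathcal V$, and values $[\![M]\!]_\rho\in\mathcal V$ for untyped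 $\lambda$-terms $M$ and maps $\rho$ from individual variables to $\mathcal V$ (individual environments), such that $[\![x]\!]_\rho=\rho(x)$, $[\![MN]\!]_\rho=[\![M]\!]_\rho\cdot[\![N]\!]_\rho$, $[\![\lambda x.M]\!]_\rho\cdot v=[\![M]\!]_{\rho[v/x]}$, $[\![M]\!]_\rho$ depends only on $\rho$ restricted to free variables of $M$, and $M=_\beta N$ implies $[\![M]\!]_\rho=[\![N]\!]_\rho$; fix one. A well-founded frame is a pair $(\mathcal W,\rhd)$ with $\mathcal W$ nonempty and $\rhd$ a binary relation on $\mathcal W$ admitting no infinite chain $p_0\rhd p_1\rhd p_2\rhd\cdots$; $\trianglerighteq$ denotes the reflexive-transitive closure of $\rhd$. $\rhd$ is locally linear if whenever $p\rhd q$ there is $r$ with $p\trianglerighteq r\rhd q$ such that $r\rhd s$ implies $q\trianglerighteq s$ for all $s$. A $\lambda$A-frame is a well-founded frame whose $\rhd$ is locally linear. A type environment $\eta$ assigns a set $\eta(X)_p\subseteq\mathcal V$ to each type variable $X$ and world $p$; it is hereditary if $p\rhd q$ implies $\eta(X)_p\subseteq\eta(X)_q$. For hereditary $\eta$, $\mathcal I[A]^\eta_p\subseteq\mathcal V$ is defined (by well-founded induction on $p$ and the syntactic rank of $A$) by: $\mathcal I[A]^\eta_p=\mathcal V$ if $A$ is a $\top$-variant; otherwise $\mathcal I[X]^\eta_p=\eta(X)_p$; $\mathcal I[\bullet A]^\eta_p=\{u\mid u\in\mathcal I[A]^\eta_q\text{ for all }q\text{ with }p\rhd q\}$; $\mathcal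 I[A\to B]^\eta_p=\{u\mid \text{for all }q\text{ with }p\trianglerighteq q\text{ and all }v\in\mathcal I[A]^\eta_q,\ u\cdot v\in\mathcal I[B]^\eta_q\}$; $\mathcal I[\mu X.A]^\eta_p=\mathcal I[A[\mu X.A/X]]^\eta_p$. *)

(* Locally-nameless syntax: free variables are names (nat),
   bound variables are de Bruijn indices, so alpha-convertible expressions
   are syntactically identical.  Binding constructs are written through
   [close], e.g.  mu X. A  is  [TMu (close X A)],  lambda x. M  is
   [Lam (closet x M)]. *)
From Stdlib Require Import List Arith Relations.
Import ListNotations.

Inductive ty : Type :=
| TFree  (X : nat)
| TBound (i : nat)
| TArr   (A B : ty)
| TLater (A : ty)
| TMu    (A : ty).

Fixpoint open_rec (k : nat) (U A : ty) : ty :=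
  match A with
  | TFree X => TFree X
  | TBound i => if Nat.eqb i k then U else TBound i
  | TArr A B => TArr (open_rec k U A) (open_rec k U B)
  | TLater A => TLater (open_rec k U A)
  | TMu A => TMu (open_rec (S k) U A)
  end.
Definition open (A U : ty) : ty := open_rec 0 U A.

Fixpoint close_rec (k X : nat) (A : ty) : ty :=
  match A with
  | TFree Y => if Nat.eqb Y X then TBound k else TFree Y
  | TBound i => TBound i
  | TArr A B => TArr (close_rec k X A) (close_rec k X B)
  | TLater A => TLater (close_rec k X A)
  | TMu A => TMu (close_rec (S k) X A)
  end.
Definition close (X : nat) (A : ty) : ty := close_rec 0 X A.

(* capture-avoiding substitution A[U/X] (U closed w.r.t. indices) *)
Fixpoint subst (X : nat) (U A : ty) : ty :=
  match A with
  | TFree Y => if Nat.eqb Y X then U else TFree Y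
  | TBound i => TBound i
  | TArr A B => TArr (subst X U A) (subst X U B)
  | TLater A => TLater (subst X U A)
  | TMu A => TMu (subst X U A)
  end.

Fixpoint fv (A : ty) : list nat :=
  match A with
  | TFree X => [X]
  | TBound _ => []
  | TArr A B => fv A ++ fv B
  | TLater A => fv A
  | TMu A => fv A
  end.

Definition top : ty := TMu (TLater (TBound 0)).

Fixpoint tail (A : ty) : ty :=
  match A with
  | TFree X => TFree X
  | TBound i => TBound i
  | TArr _ B => tail B
  | TLater A => TLater (tail A)
  | TMu A => TMu (tail A)
  end.

(* On a tail  bullet^{m0} mu X1. bullet^{m1} ... mu Xn. bullet^{mn} Y :
   ctx records, for each enclosing mu binder (innermost first), whether a
   bullet has occurred after (inside) it.  The tail is a top-variant iff Y
   is bound by some mu X_i (innermost binding) and some bullet occurs after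
   that binder, i.e. m_i + ... + m_n >= 1. *)
Fixpoint tv (A : ty) (ctx : list bool) : bool :=
  match A with
  | TFree _ => false
  | TBound j => nth j ctx false
  | TArr _ _ => false
  | TLater A => tv A (map (fun _ => true) ctx)
  | TMu A => tv A (false :: ctx)
  end.

Definition topv (A : ty) : bool := tv (tail A) [].

Fixpoint proper (X : nat) (A : ty) : bool :=
  match A with
  | TFree Y => negb (Nat.eqb Y X)
  | TBound _ => true
  | TArr A B => (proper X A && proper X B) || topv B
  | TLater _ => true
  | TMu A' => proper X A' || topv (TMu A')
  end.

Fixpoint proper_b (k : nat) (A : ty) : bool :=
  match A with
  | TFree _ => true
  | TBound i => negb (Nat.eqb i k)
  | TArr A B => (proper_b k A && proper_b k B) || topv B
  | TLater _ => true
  | TMu A' => proper_b (S k) A' || topv (TMu A')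
  end.

Fixpoint wf_rec (n : nat) (A : ty) : bool :=
  match A with
  | TFree _ => true
  | TBound i => Nat.ltb i n
  | TArr A B => wf_rec n A && wf_rec n B
  | TLater A => wf_rec n A
  | TMu A => wf_rec (S n) A && proper_b 0 A
  end.
Definition wf (A : ty) : Prop := wf_rec 0 A = true.

Inductive eqty (d : bool) : ty -> ty -> Prop :=
| eq_refl A : wf A -> eqty d A A
| eq_sym A B : eqty d A B -> eqty d B A
| eq_trans A B C : eqty d A B -> eqty d B C -> eqty d A C
| eq_later A B : eqty d A B -> eqty d (TLater A) (TLater B)
| eq_arr A B C D : eqty d A C -> eqty d B D -> eqty d (TArr A B) (TArr C D)
| eq_arrtop A : wf A -> eqty d (TArr A top) top
| eq_unfold A : wf (TMu A) -> eqty d (TMu A) (open A (TMu A))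
| eq_fix X A C : wf A -> wf C -> proper X C = true ->
    eqty d A (subst X A C) -> eqty d A (TMu (close X C))
| eq_dist A B : d = true -> wf A -> wf B ->
    eqty d (TLater (TArr A B)) (TArr (TLater A) (TLater B)).

Definition cong := eqty false.
Definition simeq := eqty true.

(* finite sets are represented by lists, up to having the same elements *)
Definition seteq {T : Type} (l1 l2 : list T) : Prop := forall a, In a l1 <-> In a l2.

Definition FTV (g : list (nat * nat)) : list nat :=
  flat_map (fun p => [fst p; snd p]) g.

Definition wfg (g : list (nat * nat)) : Prop :=
  (forall X Y, In (X, Y) g -> X <> Y) /\
  (forall p q, In p g -> In q g -> p <> q ->
     fst p <> fst q /\ fst p <> snd q /\ snd p <> fst q /\ snd p <> snd q).

Inductive sub : list (nat * nat) -> ty -> ty -> Prop :=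
| sub_assm g X Y : wfg g -> In (X, Y) g -> sub g (TFree X) (TFree Y)
| sub_top g A : wfg g -> wf A -> sub g A top
| sub_eq g A B : wfg g -> simeq A B -> sub g A B
| sub_trans g g1 g2 A B C : sub g1 A B -> sub g2 B C ->
    seteq g (g1 ++ g2) -> wfg g -> sub g A C
| sub_later g A B : sub g A B -> sub g (TLater A) (TLater B)
| sub_arr g g1 g2 A A' B B' : sub g1 A' A -> sub g2 B B' ->
    seteq g (g1 ++ g2) -> wfg g -> sub g (TArr A B) (TArr A' B')
| sub_mu g g' X Y A B : sub g' A B -> seteq g' ((X, Y) :: g) -> wfg g' ->
    ~ In X (FTV g) -> ~ In X (fv B) -> ~ In Y (FTV g) -> ~ In Y (fv A) ->
    proper X A = true -> proper Y B = true ->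
    sub g (TMu (close X A)) (TMu (close Y B))
| sub_next g A : wfg g -> wf A -> sub g A (TLater A).

Definition subty (A B : ty) : Prop := sub [] A B.

Inductive tm : Type :=
| Var (x : nat)
| BVar (i : nat)
| Lam (M : tm)
| App (M N : tm).

Fixpoint closet_rec (k x : nat) (M : tm) : tm :=
  match M with
  | Var y => if Nat.eqb y x then BVar k else Var y
  | BVar i => BVar i
  | Lam M => Lam (closet_rec (S k) x M)
  | App M N => App (closet_rec k x M) (closet_rec k x N)
  end.
Definition closet (x : nat) (M : tm) : tm := closet_rec 0 x M.

Fixpoint substt (x : nat) (N M : tm) : tm :=
  match M with
  | Var y => if Nat.eqb y x then N else Var y
  | BVar i => BVar i
  | Lam M => Lam (substt x N M)
  | App M1 M2 => App (substt x N M1) (substt x N M2)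
  end.

Fixpoint lct_rec (n : nat) (M : tm) : bool :=
  match M with
  | Var _ => true
  | BVar i => Nat.ltb i n
  | Lam M => lct_rec (S n) M
  | App M N => lct_rec n M && lct_rec n N
  end.
Definition lct (M : tm) : Prop := lct_rec 0 M = true.

Fixpoint fvt (M : tm) : list nat :=
  match M with
  | Var x => [x]
  | BVar _ => []
  | Lam M => fvt M
  | App M N => fvt M ++ fvt N
  end.

Inductive beta : tm -> tm -> Prop :=
| beta_root x M N : lct M -> lct N -> beta (App (Lam (closet x M)) N) (substt x N M)
| beta_lam x M N : beta M N -> beta (Lam (closet x M)) (Lam (closet x N))
| beta_appl M M' N : beta M M' -> lct N -> beta (App M N) (App M' N)
| beta_appr M N N' : lct M -> beta N N' -> beta (App M N) (App M N').

Definition beta_eq : tm -> tm -> Prop := clos_refl_sym_trans tm beta.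

Definition ctx := list (nat * ty).

(* a finite map from individual variables to type expressions *)
Definition wfc (G : ctx) : Prop :=
  (forall x A B, In (x, A) G -> In (x, B) G -> A = B) /\
  (forall x A, In (x, A) G -> wf A).

Definition later_ctx (G : ctx) : ctx := map (fun p => (fst p, TLater (snd p))) G.

Inductive typ : ctx -> tm -> ty -> Prop :=
| typ_var G x A : wfc G -> In (x, A) G -> typ G (Var x) A
| typ_shift G G' M A : typ G' M (TLater A) -> seteq G' (later_ctx G) -> wfc G ->
    typ G M A
| typ_top G M : wfc G -> lct M -> typ G M top
| typ_sub G M A B : typ G M A -> subty A B -> typ G M B
| typ_abs G G' x M A B : typ G' M B -> seteq G' ((x, A) :: G) -> wfc G' ->
    typ G (Lam (closet x M)) (TArr A B)
| typ_app G G1 G2 M N A B : typ G1 M (TArr A B) -> typ G2 N A ->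
    seteq G (G1 ++ G2) -> wfc G -> typ G (App M N) B.

Definition upd {V : Type} (rho : nat -> V) (x : nat) (v : V) : nat -> V :=
  fun y => if Nat.eqb y x then v else rho y.

Record lam_alg : Type := {
  V : Type;
  V_ne : inhabited V;
  app : V -> V -> V;
  den : tm -> (nat -> V) -> V;
  den_var : forall x rho, den (Var x) rho = rho x;
  den_app : forall M N rho, lct M -> lct N ->
      den (App M N) rho = app (den M rho) (den N rho);
  den_lam : forall x M rho v, lct M ->
      app (den (Lam (closet x M)) rho) v = den M (upd rho x v);
  den_fv : forall M rho rho', lct M ->
      (forall x, In x (fvt M) -> rho x = rho' x) -> den M rho = den M rho';
  den_beta : forall M N rho, lct M -> lct N -> beta_eq M N -> den M rho = den N rho
}.

Record frame : Type := {
  W : Type;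
  W_ne : inhabited W;
  R : W -> W -> Prop;
  R_wf : ~ exists f : nat -> W, forall n, R (f n) (f (S n));
  R_loclin : forall p q, R p q ->
      exists r, clos_refl_trans W R p r /\ R r q /\
        (forall s, R r s -> clos_refl_trans W R q s)
}.

Definition Rstar (F : frame) : W F -> W F -> Prop := clos_refl_trans (W F) (R F).

Definition hereditary (F : frame) {Val : Type} (eta : nat -> W F -> Val -> Prop) : Prop :=
  forall X p q u, R F p q -> eta X p u -> eta X q u.

(* I A p u  means  u ∈ I[A]^eta_p.  The interpretation is the (unique, by
   well-founded recursion) family satisfying its defining clauses on type
   expressions. *)
Definition interp_spec (L : lam_alg) (F : frame) (eta : nat -> W F -> V L -> Prop)
  (I : ty -> W F -> V L -> Prop) : Prop :=
  (forall A p u, wf A -> topv A = true -> I A p u) /\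
  (forall X p u, topv (TFree X) = false -> (I (TFree X) p u <-> eta X p u)) /\
  (forall A p u, wf (TLater A) -> topv (TLater A) = false ->
     (I (TLater A) p u <-> forall q, R F p q -> I A q u)) /\
  (forall A B p u, wf (TArr A B) -> topv (TArr A B) = false ->
     (I (TArr A B) p u <->
        forall q, Rstar F p q -> forall v, I A q v -> I B q (app L u v))) /\
  (forall A p u, wf (TMu A) -> topv (TMu A) = false ->
     (I (TMu A) p u <-> I (open A (TMu A)) p u)).

From Pilot Require Import Defs.
From Stdlib Require Import List Arith Relations Lia Bool.
From Stdlib Require Import Classical ClassicalEpsilon FunctionalExtensionality Wellfounded.
Import ListNotations.

(* The interpretation is specified only by its clauses, and two facts
   about it carry the argument.  First, every hereditary environment has an interpretation,
   built by well-founded recursion on worlds and on a rank of types that drops when a non-top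
   mu-type is unfolded.  Second, a substitution lemma: the meaning of C[U/X] is the meaning of C
   in the environment sending X to the meaning of U, also along frame morphisms; if C is proper
   in X, agreement on X is only needed at strictly later worlds.  With these, the fixed-point
   rule of equality and the mu-rule of subtyping follow by well-founded induction on worlds
   (for the latter, X and Y denote the two mu-types from the next world on), distribution of
   the later modality over arrows from local linearity, and the shift rule by adding a fresh
   world whose only successor is the current one. *)

(** * Syntax of type expressions *)

Fixpoint scoped (n : nat) (A : ty) : bool :=
  match A with
  | TFree _ => true
  | TBound i => i <? n
  | TArr A B => scoped n A && scoped n B
  | TLater A => scoped n A
  | TMu A => scoped (S n) A
  end.

Fixpoint msubst (s : nat -> ty) (A : ty) : ty :=
  match A with
  | TFree X => s X
  | TBound i => TBound i
  | TArr A B => TArr (msubst s A) (msubst s B)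
  | TLater A => TLater (msubst s A)
  | TMu A => TMu (msubst s A)
  end.

Lemma wf_rec_scoped : forall A n, wf_rec n A = true -> scoped n A = true.
Proof.
  induction A; simpl; intros n H; auto.
  - apply andb_true_iff in H as [H1 H2]; rewrite IHA1, IHA2; auto.
  - apply andb_true_iff in H as [H _]; auto.
Qed.

Lemma scoped_tail : forall A n, scoped n A = true -> scoped n (Defs.tail A) = true.
Proof.
  induction A; simpl; intros n H; auto.
  apply andb_true_iff in H as [_ H]; auto.
Qed.

Lemma wf_rec_weaken : forall A n m, wf_rec n A = true -> n <= m -> wf_rec m A = true.
Proof.
  induction A; simpl; intros n m H Hnm; auto.
  - apply Nat.ltb_lt in H; apply Nat.ltb_lt; lia.
  - apply andb_true_iff in H as [H1 H2]; rewrite (IHA1 n), (IHA2 n); auto.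
  - eauto.
  - apply andb_true_iff in H as [H1 H2]; rewrite (IHA (S n)), H2; auto; lia.
Qed.

Lemma wf_arr A B : wf (TArr A B) <-> wf A /\ wf B.
Proof. apply andb_true_iff. Qed.

Lemma wf_later A : wf (TLater A) <-> wf A.
Proof. reflexivity. Qed.

Lemma wf_top : wf top.
Proof. reflexivity. Qed.

Lemma nth_map_const_true : forall (c : list bool) j,
  nth j (map (fun _ => true) c) false = (j <? length c).
Proof. induction c; destruct j; simpl; auto. Qed.

Lemma tv_scoped : forall A n c1 c2, scoped n A = true -> n <= length c1 -> n <= length c2 ->
  (forall j, j < n -> nth j c1 false = nth j c2 false) -> tv A c1 = tv A c2.
Proof.
  induction A; simpl; intros n c1 c2 H H1 H2 Hc; auto.
  - apply Nat.ltb_lt in H; auto.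
  - apply (IHA n); rewrite ?length_map; auto.
    intros j Hj. rewrite !nth_map_const_true.
    destruct (Nat.ltb_spec j (length c1)), (Nat.ltb_spec j (length c2)); auto; lia.
  - apply (IHA (S n)); simpl; auto; try lia.
    intros [|j] Hj; simpl; auto. apply Hc; lia.
Qed.

Lemma tv_tail_closed U c : scoped 0 U = true -> tv (Defs.tail U) c = topv U.
Proof.
  intro H. apply (tv_scoped _ 0); simpl; try lia.
  apply scoped_tail; exact H.
Qed.

Lemma tv_open_rec : forall A k U c, length c <= k -> tv (Defs.tail A) c = true ->
  tv (Defs.tail (open_rec k U A)) c = true.
Proof.
  induction A; simpl; intros k U c Hk H; auto.
  - destruct (Nat.eqb_spec i k); simpl; auto.
    subst. rewrite nth_overflow in H by lia. discriminate.
  - apply IHA; rewrite ?length_map; auto.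
  - apply IHA; simpl; auto; lia.
Qed.

Lemma topv_open_rec A k U : topv A = true -> topv (open_rec k U A) = true.
Proof. apply tv_open_rec; simpl; lia. Qed.

Lemma tv_msubst : forall s A c, tv (Defs.tail A) c = true -> tv (Defs.tail (msubst s A)) c = true.
Proof. induction A; simpl; intros; auto; discriminate. Qed.

Lemma topv_msubst s A : topv A = true -> topv (msubst s A) = true.
Proof. apply tv_msubst. Qed.

Lemma tv_close_rec : forall A k X c, length c <= k ->
  tv (Defs.tail (close_rec k X A)) c = tv (Defs.tail A) c.
Proof.
  induction A; simpl; intros k X0 c Hk; auto.
  - destruct (Nat.eqb_spec X X0); simpl; auto. apply nth_overflow; lia.
  - apply IHA. rewrite length_map; auto.
  - apply IHA. simpl; lia.
Qed.

Lemma topv_close_rec A k X : topv (close_rec k X A) = topv A.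
Proof. apply tv_close_rec; simpl; lia. Qed.

(* The last entry of [c ++ [b]] is the binder being unfolded; substituting a top-variant for it
   keeps the tail a top-variant whatever [b] records. *)
Lemma tv_unfold : forall A k U c b, length c = k ->
  tv (Defs.tail A) (c ++ [b]) = true -> topv U = true -> scoped 0 U = true ->
  tv (Defs.tail (open_rec k U A)) c = true.
Proof.
  induction A; simpl; intros k U c b Hk H HU HsU; try discriminate.
  - destruct (Nat.eqb_spec i k).
    + rewrite tv_tail_closed; auto.
    + simpl. destruct (Nat.lt_ge_cases i (length c)).
      * rewrite app_nth1 in H; auto.
      * rewrite app_nth2 in H by auto.
        destruct (i - length c) as [|[|j]] eqn:E; simpl in H; try lia; discriminate.
  - eapply IHA2; eauto.
  - rewrite map_app in H.
    apply (IHA k U (map (fun _ => true) c) true); rewrite ?length_map; auto.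
  - apply (IHA (S k) U (false :: c) b); simpl; auto.
Qed.

Lemma topv_unfold A : wf (TMu A) -> topv (TMu A) = true -> topv (open A (TMu A)) = true.
Proof.
  intros Hw Ht. apply (tv_unfold A 0 (TMu A) [] false); auto.
  apply (wf_rec_scoped (TMu A)), Hw.
Qed.

Lemma open_rec_scoped : forall T n k U, scoped n T = true -> n <= k -> open_rec k U T = T.
Proof.
  induction T; simpl; intros n k U H Hk; auto.
  - apply Nat.ltb_lt in H. destruct (Nat.eqb_spec i k); auto; lia.
  - apply andb_true_iff in H as [H1 H2]; rewrite (IHT1 n), (IHT2 n); auto.
  - rewrite (IHT n); auto.
  - rewrite (IHT (S n)); auto; lia.
Qed.

Lemma proper_b_scoped : forall U n j, scoped n U = true -> n <= j -> proper_b j U = true.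
Proof.
  induction U; simpl; intros n j H Hj; auto.
  - apply Nat.ltb_lt in H. destruct (Nat.eqb_spec i j); auto; lia.
  - apply andb_true_iff in H as [H1 H2]. rewrite (IHU1 n), (IHU2 n); auto.
  - rewrite (IHU (S n)); auto; lia.
Qed.

Lemma proper_b_open_rec : forall A j k U, proper_b j A = true -> j <> k -> scoped 0 U = true ->
  proper_b j (open_rec k U A) = true.
Proof.
  induction A; simpl; intros j k U H Hjk HU; auto.
  - destruct (Nat.eqb_spec i k); auto. apply (proper_b_scoped _ 0); auto; lia.
  - apply orb_true_iff in H as [H|H].
    + apply andb_true_iff in H as [H1 H2]. rewrite IHA1, IHA2; auto.
    + rewrite (topv_open_rec A2); auto. apply orb_true_r.
  - apply orb_true_iff in H as [H|H].
    + rewrite IHA; auto.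
    + apply orb_true_iff; right. apply (topv_open_rec (TMu A) k U H).
Qed.

Lemma wf_rec_open_rec : forall A n U, wf_rec (S n) A = true -> wf U ->
  wf_rec n (open_rec n U A) = true.
Proof.
  induction A; simpl; intros n U H HU; auto.
  - apply Nat.ltb_lt in H. destruct (Nat.eqb_spec i n).
    + apply (wf_rec_weaken _ 0); auto; lia.
    + simpl; apply Nat.ltb_lt; lia.
  - apply andb_true_iff in H as [H1 H2]; rewrite IHA1, IHA2; auto.
  - apply andb_true_iff in H as [H1 H2]. rewrite IHA; auto.
    apply proper_b_open_rec; auto. apply wf_rec_scoped; exact HU.
Qed.

Lemma wf_unfold A : wf (TMu A) -> wf (open A (TMu A)).
Proof.
  intro H. apply wf_rec_open_rec; auto.
  apply andb_true_iff in H as [H _]; exact H.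
Qed.

(* Top-variants and [•]-types have rank 0, so by properness the bound variable only occurs
   where substituting for it cannot raise the rank. *)
Fixpoint rank (A : ty) : nat :=
  if topv A then 0 else
  match A with
  | TArr A1 A2 => S (max (rank A1) (rank A2))
  | TMu A' => S (rank A')
  | _ => 0
  end.

Lemma rank_open_rec : forall A k U, proper_b k A = true -> rank (open_rec k U A) <= rank A.
Proof.
  induction A; intros k U Hp.
  - simpl; lia.
  - simpl in Hp |- *. destruct (Nat.eqb_spec i k); simpl in *; lia.
  - simpl open_rec. simpl rank at 1.
    destruct (topv (TArr (open_rec k U A1) (open_rec k U A2))) eqn:E; [lia|].
    simpl rank. destruct (topv (TArr A1 A2)) eqn:E2.
    + apply (topv_open_rec _ k U) in E2. simpl in E2. congruence.
    + simpl in Hp. change (topv (TArr A1 A2)) with (topv A2) in E2.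
      rewrite E2, orb_false_r in Hp. apply andb_true_iff in Hp as [H1 H2].
      specialize (IHA1 k U H1); specialize (IHA2 k U H2). lia.
  - simpl. destruct (topv (TLater (open_rec k U A))); lia.
  - simpl open_rec. simpl rank at 1.
    destruct (topv (TMu (open_rec (S k) U A))) eqn:E; [lia|].
    simpl rank. destruct (topv (TMu A)) eqn:E2.
    + apply (topv_open_rec _ k U) in E2. simpl in E2. congruence.
    + simpl in Hp. rewrite E2, orb_false_r in Hp.
      specialize (IHA (S k) U Hp). lia.
Qed.

Lemma rank_unfold_lt A : wf (TMu A) -> topv (TMu A) = false ->
  rank (open A (TMu A)) < rank (TMu A).
Proof.
  intros Hw Ht. apply andb_true_iff in Hw as [_ Hp].
  pose proof (rank_open_rec A 0 (TMu A) Hp).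
  simpl rank at 2. rewrite Ht. unfold open. lia.
Qed.

Lemma rank_arr_lt A B : topv (TArr A B) = false ->
  rank A < rank (TArr A B) /\ rank B < rank (TArr A B).
Proof. intro Ht. simpl rank at 2 4. rewrite Ht. lia. Qed.

Lemma proper_open_rec : forall Y A k U, proper Y A = true -> proper Y U = true ->
  proper Y (open_rec k U A) = true.
Proof.
  induction A; simpl; intros k U H HU; auto.
  - destruct (Nat.eqb_spec i k); auto.
  - apply orb_true_iff in H as [H|H].
    + apply andb_true_iff in H as [H1 H2]. rewrite IHA1, IHA2; auto.
    + rewrite (topv_open_rec A2); auto. apply orb_true_r.
  - apply orb_true_iff in H as [H|H].
    + rewrite IHA; auto.
    + apply orb_true_iff; right. apply (topv_open_rec (TMu A) k U H).
Qed.

Lemma fv_open_rec : forall A k U Y, In Y (fv (open_rec k U A)) -> In Y (fv A) \/ In Y (fv U).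
Proof.
  induction A; simpl; intros k U Y H; auto.
  - destruct (Nat.eqb_spec i k); simpl in H; auto.
  - rewrite in_app_iff in *.
    destruct H as [H|H]; [destruct (IHA1 _ _ _ H) | destruct (IHA2 _ _ _ H)]; auto.
  - eauto.
  - eauto.
Qed.

Lemma msubst_open_rec : forall s A k U, (forall Y, scoped 0 (s Y) = true) ->
  msubst s (open_rec k U A) = open_rec k (msubst s U) (msubst s A).
Proof.
  induction A; simpl; intros k U Hs; auto.
  - rewrite (open_rec_scoped _ 0); auto; lia.
  - destruct (Nat.eqb_spec i k); auto.
  - rewrite IHA1, IHA2; auto.
  - rewrite IHA; auto.
  - rewrite IHA; auto.
Qed.

Lemma proper_b_msubst : forall s A j, (forall Y, scoped 0 (s Y) = true) ->
  proper_b j A = true -> proper_b j (msubst s A) = true.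
Proof.
  induction A; simpl; intros j Hs H; auto.
  - apply (proper_b_scoped _ 0); auto; lia.
  - apply orb_true_iff in H as [H|H].
    + apply andb_true_iff in H as [H1 H2]. rewrite IHA1, IHA2; auto.
    + rewrite (topv_msubst s A2); auto. apply orb_true_r.
  - apply orb_true_iff in H as [H|H].
    + rewrite IHA; auto.
    + apply orb_true_iff; right. apply (topv_msubst s (TMu A) H).
Qed.

Lemma wf_rec_msubst : forall s A n, (forall Y, wf (s Y)) -> wf_rec n A = true ->
  wf_rec n (msubst s A) = true.
Proof.
  induction A; simpl; intros n Hs H; auto.
  - apply (wf_rec_weaken _ 0); [apply Hs | lia].
  - apply andb_true_iff in H as [H1 H2]; rewrite IHA1, IHA2; auto.
  - apply andb_true_iff in H as [H1 H2]; rewrite IHA; auto.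
    apply proper_b_msubst; auto. intro Y; apply wf_rec_scoped, Hs.
Qed.

Lemma wf_msubst s A : (forall Y, wf (s Y)) -> wf A -> wf (msubst s A).
Proof. apply wf_rec_msubst. Qed.

Lemma msubst_TFree A : msubst TFree A = A.
Proof. induction A; simpl; f_equal; auto. Qed.

Lemma msubst_upd X U A : msubst (upd TFree X U) A = subst X U A.
Proof. induction A; simpl; f_equal; auto. Qed.

Lemma proper_b_close_rec : forall A j k X, proper_b j A = true -> j <> k ->
  proper_b j (close_rec k X A) = true.
Proof.
  induction A; simpl; intros j k X0 H Hjk; auto.
  - destruct (Nat.eqb_spec X X0); simpl; auto. destruct (Nat.eqb_spec k j); simpl; auto; lia.
  - apply orb_true_iff in H as [H|H].
    + apply andb_true_iff in H as [H1 H2]. rewrite IHA1, IHA2; auto.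
    + rewrite (topv_close_rec A2), H. apply orb_true_r.
  - apply orb_true_iff in H as [H|H].
    + rewrite IHA; auto.
    + rewrite <- (topv_close_rec (TMu A) k X0) in H. apply orb_true_iff; right; exact H.
Qed.

Lemma wf_rec_close_rec : forall A n X, wf_rec n A = true -> wf_rec (S n) (close_rec n X A) = true.
Proof.
  induction A; simpl; intros n X0 H; auto.
  - destruct (Nat.eqb_spec X X0); simpl; auto; apply Nat.ltb_lt; lia.
  - apply Nat.ltb_lt in H; apply Nat.ltb_lt; lia.
  - apply andb_true_iff in H as [H1 H2]; rewrite IHA1, IHA2; auto.
  - apply andb_true_iff in H as [H1 H2]; rewrite IHA; auto.
    apply proper_b_close_rec; auto.
Qed.

Lemma proper_b_close_rec_proper : forall A n X, wf_rec n A = true -> proper X A = true ->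
  proper_b n (close_rec n X A) = true.
Proof.
  induction A; simpl; intros n X0 Hw H; auto.
  - destruct (Nat.eqb_spec X X0); simpl in *; auto. discriminate.
  - apply Nat.ltb_lt in Hw. destruct (Nat.eqb_spec i n); simpl; auto; lia.
  - apply andb_true_iff in Hw as [Hw1 Hw2].
    apply orb_true_iff in H as [H|H].
    + apply andb_true_iff in H as [H1 H2]. rewrite IHA1, IHA2; auto.
    + rewrite (topv_close_rec A2), H. apply orb_true_r.
  - apply andb_true_iff in Hw as [Hw _].
    apply orb_true_iff in H as [H|H].
    + rewrite IHA; auto.
    + rewrite <- (topv_close_rec (TMu A) n X0) in H. apply orb_true_iff; right; exact H.
Qed.

Lemma wf_mu_close A X : wf A -> proper X A = true -> wf (TMu (close X A)).
Proof.
  intros Hw Hp. unfold wf, close; simpl.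
  rewrite wf_rec_close_rec, proper_b_close_rec_proper; auto.
Qed.

Lemma open_rec_close_rec : forall A k X U, wf_rec k A = true ->
  open_rec k U (close_rec k X A) = subst X U A.
Proof.
  induction A; simpl; intros k X0 U H; auto.
  - destruct (Nat.eqb_spec X X0); simpl; auto. rewrite Nat.eqb_refl; auto.
  - apply Nat.ltb_lt in H. destruct (Nat.eqb_spec i k); auto; lia.
  - apply andb_true_iff in H as [H1 H2]; rewrite IHA1, IHA2; auto.
  - rewrite IHA; auto.
  - apply andb_true_iff in H as [H1 H2]; rewrite IHA; auto.
Qed.

Lemma lct_rec_closet_rec : forall M n x, lct_rec n M = true ->
  lct_rec (S n) (closet_rec n x M) = true.
Proof.
  induction M; simpl; intros n x0 H; auto.
  - destruct (Nat.eqb_spec x x0); simpl; auto; apply Nat.ltb_lt; lia.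
  - apply Nat.ltb_lt in H; apply Nat.ltb_lt; lia.
  - apply andb_true_iff in H as [H1 H2]; rewrite IHM1, IHM2; auto.
Qed.

(** * Frames *)

Lemma no_chain_well_founded (A : Type) (Rel : relation A) :
  ~ (exists f : nat -> A, forall n, Rel (f n) (f (S n))) -> well_founded (transp A Rel).
Proof.
  intros Hchain a. apply NNPP; intro Ha.
  assert (Hstep : forall x, ~ Acc (transp A Rel) x ->
                  exists y, Rel x y /\ ~ Acc (transp A Rel) y).
  { intros x Hx. apply NNPP; intro Hn. apply Hx. constructor. intros y Hy.
    apply NNPP; intro Hy'. apply Hn. exists y; split; assumption. }
  pose (next := fun s : {x | ~ Acc (transp A Rel) x} =>
    let e := constructive_indefinite_description _ (Hstep _ (proj2_sig s)) in
    exist (fun x => ~ Acc (transp A Rel) x) (proj1_sig e) (proj2 (proj2_sig e))).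
  assert (Hnext : forall s, Rel (proj1_sig s) (proj1_sig (next s))).
  { intro s. exact (proj1 (proj2_sig (constructive_indefinite_description _ (Hstep _ (proj2_sig s))))). }
  pose (chain := fix chain n := match n with 0 => exist _ a Ha | S n => next (chain n) end).
  apply Hchain. exists (fun n => proj1_sig (chain n)). intro n. apply Hnext.
Qed.

Section Frame.
Variable F : frame.

Definition Rplus (p q : W F) : Prop := clos_trans (W F) (R F) p q.

Lemma Rplus_converse_wf : well_founded (transp (W F) Rplus).
Proof.
  apply (wf_incl _ _ (clos_trans _ (transp _ (R F)))).
  - intros q p H. apply clos_trans_transp_permute. exact H.
  - apply wf_clos_trans, no_chain_well_founded, R_wf.
Qed.

Lemma Rstar_cases p q : Rstar F p q -> q = p \/ Rplus p q.
Proof.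
  induction 1 as [p q H | p | p q r _ IH1 _ IH2]; auto.
  - right; apply t_step; exact H.
  - destruct IH1 as [->|H1], IH2 as [->|H2]; auto.
    right; eapply t_trans; eauto.
Qed.

Lemma Rplus_Rstar p q : Rplus p q -> Rstar F p q.
Proof. apply clos_t_clos_rt. Qed.

Lemma Rstar_Rplus_trans p q r : Rstar F p q -> Rplus q r -> Rplus p r.
Proof. apply clos_rt_t. Qed.

Lemma Rplus_Rstar_trans p q r : Rplus p q -> Rstar F q r -> Rplus p r.
Proof.
  intros H1 H2. destruct (Rstar_cases q r H2) as [->|H]; auto.
  eapply t_trans; eauto.
Qed.

Lemma Rplus_first p r : Rplus p r -> exists q, R F p q /\ Rstar F q r.
Proof.
  intro H. apply clos_trans_t1n in H. destruct H as [r H | q r H Hqr].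
  - exists r; split; [exact H | apply rt_refl].
  - exists q; split; [exact H | apply Rplus_Rstar, clos_t1n_trans, Hqr].
Qed.

Lemma Rplus_last p r : Rplus p r -> exists q, Rstar F p q /\ R F q r.
Proof.
  intro H. apply clos_trans_tn1 in H. destruct H as [r H | q r H Hpq].
  - exists p; split; [apply rt_refl | exact H].
  - exists q; split; [apply Rplus_Rstar, clos_tn1_trans, Hpq | exact H].
Qed.

Lemma world_rank_ind (P : W F -> ty -> Prop) :
  (forall p A, (forall q B, Rplus p q -> P q B) -> (forall B, rank B < rank A -> P p B) -> P p A) ->
  forall p A, P p A.
Proof.
  intros H p. induction p as [p IHp] using (well_founded_induction Rplus_converse_wf).
  intro A. induction A as [A IHA] using (induction_ltof1 _ rank).
  apply H; auto.
Qed.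

End Frame.

Definition from_next (F : frame) {T : Type} (P : W F -> T -> Prop) (p : W F) : W F -> T -> Prop :=
  fun q u => forall r, Rstar F q r -> Rplus F p r -> P r u.

Lemma from_next_R F T (P : W F -> T -> Prop) p q r u :
  R F q r -> from_next F P p q u -> from_next F P p r u.
Proof.
  intros Hqr H s Hrs. apply H, rt_trans with r; [apply rt_step|]; auto.
Qed.

(** * Interpretations *)

Section Model.
Context {L : lam_alg} {F : frame} {eta : nat -> W F -> V L -> Prop}
  {I : ty -> W F -> V L -> Prop} (HI : interp_spec L F eta I).

Lemma interp_topv A p u : wf A -> topv A = true -> I A p u.
Proof. apply HI. Qed.

Lemma interp_TFree X p u : I (TFree X) p u <-> eta X p u.
Proof. apply HI; reflexivity. Qed.

Lemma interp_TLater A p u : wf A -> (I (TLater A) p u <-> forall q, R F p q -> I A q u).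
Proof.
  intro Hw. destruct (topv A) eqn:E.
  - split; intros; apply interp_topv; auto.
  - apply HI; auto.
Qed.

Lemma interp_TArr A B p u : wf A -> wf B ->
  (I (TArr A B) p u <-> forall q, Rstar F p q -> forall v, I A q v -> I B q (Defs.app L u v)).
Proof.
  intros HwA HwB. assert (Hw : wf (TArr A B)) by (apply wf_arr; auto).
  destruct (topv B) eqn:E.
  - split; intros; apply interp_topv; auto.
  - apply HI; auto.
Qed.

Lemma interp_TMu A p u : wf (TMu A) -> (I (TMu A) p u <-> I (open A (TMu A)) p u).
Proof.
  intro Hw. destruct (topv (TMu A)) eqn:E.
  - split; intros; apply interp_topv; auto using wf_unfold, topv_unfold.
  - apply HI; auto.
Qed.

Lemma interp_TMu_close X A p u : wf A -> proper X A = true ->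
  (I (TMu (close X A)) p u <-> I (subst X (TMu (close X A)) A) p u).
Proof.
  intros Hw Hp. rewrite interp_TMu by (apply wf_mu_close; auto).
  unfold open, close. rewrite open_rec_close_rec by exact Hw. reflexivity.
Qed.

Hypothesis Heta : hereditary F eta.

Lemma interp_R : forall p A, wf A -> forall u q, I A p u -> R F p q -> I A q u.
Proof.
  apply (world_rank_ind F (fun p A => wf A -> forall u q, I A p u -> R F p q -> I A q u)).
  intros p A IHw IHr Hw u q H Hpq.
  destruct (topv A) eqn:Et; [apply interp_topv; auto|].
  destruct A as [X | i | A B | A | A].
  - apply interp_TFree in H; apply interp_TFree. eapply Heta; eauto.
  - discriminate Hw.
  - apply wf_arr in Hw as [HwA HwB]. rewrite interp_TArr in H |- * by auto.
    intros r Hr. apply H, rt_trans with q; [apply rt_step|]; auto.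
  - rewrite interp_TLater in H |- * by auto.
    intros r Hr. apply (IHw q A); auto. apply t_step; exact Hpq.
  - rewrite interp_TMu in H |- * by auto.
    apply (IHr (open A (TMu A))); auto using rank_unfold_lt, wf_unfold.
Qed.

Lemma interp_Rstar p q A u : wf A -> Rstar F p q -> I A p u -> I A q u.
Proof.
  intros Hw Hpq. induction Hpq; eauto using interp_R.
Qed.

Lemma from_next_interp A p q u :
  wf A -> Rplus F p q -> (from_next F (I A) p q u <-> I A q u).
Proof.
  intros Hw Hpq. split.
  - intro H. apply H; [apply rt_refl | exact Hpq].
  - intros H r Hqr _. exact (interp_Rstar q r A u Hw Hqr H).
Qed.

End Model.

Lemma hereditary_upd F T (eta : nat -> W F -> T -> Prop) X P :
  hereditary F eta -> (forall p q u, R F p q -> P p u -> P q u) -> hereditary F (upd eta X P).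
Proof.
  intros Heta HP Z p q u Hpq. unfold upd. destruct (Z =? X); eauto.
Qed.

Section Existence.
Variables (L : lam_alg) (F : frame) (eta : nat -> W F -> V L -> Prop).

(* The clauses unfolded [n] times at world [p], where [later] interprets types at strictly later
   worlds; the arrow clause is split into the cases [q = p] and [Rplus F p q].  Fuel
   [S (rank A)] suffices. *)
Fixpoint approx (p : W F) (later : forall q, Rplus F p q -> ty -> V L -> Prop)
    (n : nat) (A : ty) (u : V L) {struct n} : Prop :=
  match n with
  | 0 => True
  | S n =>
    if topv A then True else
    match A with
    | TFree X => eta X p u
    | TBound _ => True
    | TLater A => forall q (H : R F p q), later q (t_step _ _ _ _ H) A u
    | TArr A B => (forall v, approx p later n A v -> approx p later n B (Defs.app L u v)) /\
                  (forall q (H : Rplus F p q) v, later q H A v -> later q H B (Defs.app L u v))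
    | TMu A => approx p later n (open A (TMu A)) u
    end
  end.

Definition interp_at : W F -> ty -> V L -> Prop :=
  Fix (Rplus_converse_wf F) (fun _ => ty -> V L -> Prop)
    (fun p later A u => approx p later (S (rank A)) A u).

Lemma interp_at_eq p :
  interp_at p = fun A u => approx p (fun q _ => interp_at q) (S (rank A)) A u.
Proof.
  unfold interp_at at 1. rewrite Fix_eq; [reflexivity|].
  intros q f g Hfg.
  replace g with f by (apply functional_extensionality_dep; intro r;
                       apply functional_extensionality_dep; intro; auto).
  reflexivity.
Qed.

Lemma approx_fuel : forall n m A p later u, wf A -> rank A < n -> rank A < m ->
  (approx p later n A u <-> approx p later m A u).
Proof.
  induction n as [|n IHn]; intros m A p later u Hw Hn Hm; [lia|].
  destruct m as [|m]; [lia|]. cbn [approx].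
  destruct (topv A) eqn:Et; [tauto|].
  destruct A as [X | i | A B | A | A].
  - tauto.
  - discriminate Hw.
  - apply wf_arr in Hw as [HwA HwB]. destruct (rank_arr_lt A B Et).
    split; intros [H1 H2]; split; auto; intros v Hv;
      (apply (IHn m); [auto | lia | lia | apply H1, (IHn m); auto; lia]).
  - tauto.
  - pose proof (rank_unfold_lt A Hw Et).
    apply IHn; auto using wf_unfold; lia.
Qed.

Definition canonical_interp (A : ty) (p : W F) (u : V L) : Prop := interp_at p A u.

Lemma canonical_interp_unfold A p u :
  canonical_interp A p u <-> approx p (fun q _ => interp_at q) (S (rank A)) A u.
Proof. unfold canonical_interp. rewrite interp_at_eq. reflexivity. Qed.

Lemma canonical_interp_spec : interp_spec L F eta canonical_interp.
Proof.
  split; [|split; [|split; [|split]]].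
  - intros A p u _ Ht. apply canonical_interp_unfold. cbn [approx]. rewrite Ht. trivial.
  - intros X p u _. rewrite canonical_interp_unfold. reflexivity.
  - intros A p u _ Ht. rewrite canonical_interp_unfold. cbn [approx]. rewrite Ht. reflexivity.
  - intros A B p u Hw Ht. rewrite canonical_interp_unfold. cbn [approx]. rewrite Ht.
    apply wf_arr in Hw as [HwA HwB]. destruct (rank_arr_lt A B Ht) as [HA HB].
    assert (EA : forall v, approx p (fun q _ => interp_at q) (rank (TArr A B)) A v <->
                           canonical_interp A p v).
    { intro v. rewrite canonical_interp_unfold. apply approx_fuel; auto; lia. }
    assert (EB : forall v, approx p (fun q _ => interp_at q) (rank (TArr A B)) B v <->
                           canonical_interp B p v).
    { intro v. rewrite canonical_interp_unfold. apply approx_fuel; auto; lia. }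
    split.
    + intros [Hnow Hlater] q Hq v Hv. destruct (Rstar_cases F p q Hq) as [->|Hpq].
      * apply EB, Hnow, EA, Hv.
      * exact (Hlater q Hpq v Hv).
    + intro H. split.
      * intros v Hv. apply EB, H, EA, Hv. apply rt_refl.
      * intros q Hpq v Hv. exact (H q (Rplus_Rstar F p q Hpq) v Hv).
  - intros A p u Hw Ht. rewrite canonical_interp_unfold. cbn [approx]. rewrite Ht.
    rewrite canonical_interp_unfold.
    apply approx_fuel; auto using wf_unfold. pose proof (rank_unfold_lt A Hw Ht). lia.
Qed.

End Existence.

Lemma interp_exists L F eta : exists I, interp_spec L F eta I.
Proof. exists (canonical_interp L F eta). apply canonical_interp_spec. Qed.

(** * The substitution lemma *)

Section Agreement.
Variables (L : lam_alg) (F1 F2 : frame) (h : W F1 -> W F2).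
Hypothesis h_R : forall a b, R F1 a b -> R F2 (h a) (h b).
Hypothesis h_R_back : forall a b', R F2 (h a) b' -> exists b, R F1 a b /\ b' = h b.
Variables (eta1 : nat -> W F1 -> V L -> Prop) (I1 : ty -> W F1 -> V L -> Prop).
Hypothesis HI1 : interp_spec L F1 eta1 I1.
Variables (eta2 : nat -> W F2 -> V L -> Prop) (I2 : ty -> W F2 -> V L -> Prop).
Hypothesis HI2 : interp_spec L F2 eta2 I2.
Variable s : nat -> ty.
Hypothesis s_wf : forall Y, wf (s Y).

Lemma h_Rstar a b : Rstar F1 a b -> Rstar F2 (h a) (h b).
Proof.
  induction 1; [apply rt_step | apply rt_refl | eapply rt_trans]; eauto.
Qed.

Lemma h_Rstar_back a b' : Rstar F2 (h a) b' -> exists b, Rstar F1 a b /\ b' = h b.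
Proof.
  intro H. apply clos_rt_rt1n in H. remember (h a) as ha eqn:E. revert a E.
  induction H as [| x y z Hxy _ IH]; intros a E; subst.
  - exists a; split; [apply rt_refl | reflexivity].
  - destruct (h_R_back _ _ Hxy) as [b [Hab ->]].
    destruct (IH b Logic.eq_refl) as [c [Hbc ->]].
    exists c; split; [apply rt_trans with b; [apply rt_step|] |]; auto.
Qed.

(* [guarded Y]: the type is proper in [Y], so [Y] need only be matched at strictly later worlds. *)
Definition env_agree (guarded : nat -> Prop) (p : W F1) (A : ty) : Prop :=
  forall Y, In Y (fv A) -> forall q, Rstar F1 p q -> (guarded Y -> Rplus F1 p q) ->
  forall u, eta2 Y (h q) u <-> I1 (s Y) q u.

Lemma env_agree_incl guarded p A B :
  incl (fv B) (fv A) -> env_agree guarded p A -> env_agree guarded p B.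
Proof. intros Hincl H Y HY. apply H, Hincl, HY. Qed.

Lemma env_agree_later guarded guarded' p q A B :
  incl (fv B) (fv A) -> Rplus F1 p q -> env_agree guarded p A -> env_agree guarded' q B.
Proof.
  intros Hincl Hpq H Y HY r Hqr _. apply H.
  - apply Hincl, HY.
  - apply rt_trans with q; [apply Rplus_Rstar, Hpq | exact Hqr].
  - intros _. eapply Rplus_Rstar_trans; eauto.
Qed.

Lemma agree_TArr p A B : wf A -> wf B ->
  (forall q, Rstar F1 p q -> forall v, I1 (msubst s A) q v <-> I2 A (h q) v) ->
  (forall q, Rstar F1 p q -> forall v, I1 (msubst s B) q v <-> I2 B (h q) v) ->
  forall u, I1 (msubst s (TArr A B)) p u <-> I2 (TArr A B) (h p) u.
Proof.
  intros HwA HwB IHA IHB u. simpl msubst.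
  rewrite (interp_TArr HI1), (interp_TArr HI2) by (auto using wf_msubst).
  split.
  - intros H q' Hq' v Hv. destruct (h_Rstar_back _ _ Hq') as [q [Hpq ->]].
    apply IHB, H, IHA; auto.
  - intros H q Hpq v Hv. apply IHB, H, IHA; auto using h_Rstar.
Qed.

Lemma agree_TLater p A : wf A ->
  (forall q, R F1 p q -> forall v, I1 (msubst s A) q v <-> I2 A (h q) v) ->
  forall u, I1 (msubst s (TLater A)) p u <-> I2 (TLater A) (h p) u.
Proof.
  intros HwA IHA u. simpl msubst.
  rewrite (interp_TLater HI1), (interp_TLater HI2) by (auto using wf_msubst).
  split.
  - intros H q' Hq'. destruct (h_R_back _ _ Hq') as [q [Hpq ->]]. apply IHA, H; auto.
  - intros H q Hpq. apply IHA, H; auto.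
Qed.

Lemma agree_TMu p A : wf (TMu A) ->
  (forall v, I1 (msubst s (open A (TMu A))) p v <-> I2 (open A (TMu A)) (h p) v) ->
  forall u, I1 (msubst s (TMu A)) p u <-> I2 (TMu A) (h p) u.
Proof.
  intros Hw IHA u. assert (Hws : wf (msubst s (TMu A))) by (apply wf_msubst; auto).
  rewrite (interp_TMu HI1 (msubst s A)), (interp_TMu HI2) by auto.
  change (TMu (msubst s A)) with (msubst s (TMu A)). unfold open.
  rewrite <- msubst_open_rec by (intro Y; apply wf_rec_scoped, s_wf).
  apply IHA.
Qed.

Lemma interp_msubst_agree : forall p A, wf A -> forall guarded,
  (forall Y, guarded Y -> proper Y A = true) -> env_agree guarded p A ->
  forall u, I1 (msubst s A) p u <-> I2 A (h p) u.
Proof.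
  apply (world_rank_ind F1 (fun p A => wf A -> forall guarded,
    (forall Y, guarded Y -> proper Y A = true) -> env_agree guarded p A ->
    forall u, I1 (msubst s A) p u <-> I2 A (h p) u)).
  intros p A IHw IHr Hw guarded Hp Hagree.
  assert (IHlater : forall q B, Rplus F1 p q -> wf B -> incl (fv B) (fv A) ->
                    forall u, I1 (msubst s B) q u <-> I2 B (h q) u).
  { intros q B Hpq HwB Hincl. apply (IHw q B Hpq HwB (fun _ => False)); [tauto|].
    eapply env_agree_later; eauto. }
  assert (IH : forall B, rank B < rank A -> wf B -> incl (fv B) (fv A) ->
               (forall Y, guarded Y -> proper Y B = true) ->
               forall q, Rstar F1 p q -> forall u, I1 (msubst s B) q u <-> I2 B (h q) u).
  { intros B Hr HwB Hincl HpB q Hpq. destruct (Rstar_cases F1 p q Hpq) as [->|Hpq'].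
    - apply (IHr B Hr HwB guarded HpB). eapply env_agree_incl; eauto.
    - apply IHlater; auto. }
  destruct (topv A) eqn:Et.
  { intro u. split; intros _; [apply (interp_topv HI2) | apply (interp_topv HI1)]; auto.
    - apply wf_msubst; auto.
    - apply topv_msubst; auto. }
  destruct A as [X | i | A B | A | A].
  - intro u. simpl. rewrite (interp_TFree HI2). symmetry.
    apply Hagree; [left; reflexivity | apply rt_refl |].
    intro HX. specialize (Hp X HX). simpl in Hp. rewrite Nat.eqb_refl in Hp. discriminate.
  - discriminate Hw.
  - apply wf_arr in Hw as [HwA HwB]. destruct (rank_arr_lt A B Et) as [HrA HrB].
    assert (HpAB : forall Y, guarded Y -> proper Y A = true /\ proper Y B = true).
    { intros Y HY. specialize (Hp Y HY). simpl in Hp. change (topv (TArr A B)) with (topv B) in Et.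
      rewrite Et, orb_false_r in Hp. apply andb_true_iff, Hp. }
    apply agree_TArr; auto; apply IH; auto.
    + apply incl_appl, incl_refl.
    + intros Y HY; apply HpAB, HY.
    + apply incl_appr, incl_refl.
    + intros Y HY; apply HpAB, HY.
  - apply agree_TLater; auto. intros q Hpq. apply IHlater; [apply t_step, Hpq | exact Hw | apply incl_refl].
  - apply agree_TMu; auto.
    apply IH; [apply rank_unfold_lt | apply wf_unfold | | | apply rt_refl]; auto.
    + intros Y HY. apply fv_open_rec in HY as [HY|HY]; exact HY.
    + intros Y HY. apply proper_open_rec; auto.
      pose proof (Hp Y HY) as HpY. simpl in HpY. rewrite Et, orb_false_r in HpY. exact HpY.
Qed.

End Agreement.

Lemma interp_subst L F eta I eta' I' X U C p :
  interp_spec L F eta I -> interp_spec L F eta' I' -> wf U -> wf C ->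
  (forall Y, In Y (fv C) -> Y <> X -> forall q, Rstar F p q ->
     forall u, eta' Y q u <-> eta Y q u) ->
  (forall q, Rstar F p q -> (proper X C = true -> Rplus F p q) ->
     forall u, eta' X q u <-> I U q u) ->
  forall u, I (subst X U C) p u <-> I' C p u.
Proof.
  intros HI HI' HwU HwC Hother HX u. rewrite <- msubst_upd.
  apply (interp_msubst_agree L F F (fun q => q) (fun _ _ H => H)
           (fun a b H => ex_intro _ b (conj H Logic.eq_refl)) eta I HI eta' I' HI')
    with (guarded := fun Y => Y = X /\ proper X C = true); auto.
  - unfold upd; intro Y; destruct (Y =? X); auto. reflexivity.
  - intros Y [-> HpC]; exact HpC.
  - intros Y HY q Hpq Hg v. unfold upd. destruct (Nat.eqb_spec Y X) as [->|HYX].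
    + apply HX; auto.
    + rewrite (interp_TFree HI). apply Hother; auto.
Qed.

(** * Soundness of type equality and subtyping *)

Lemma eqty_wf d A B : eqty d A B -> wf A /\ wf B.
Proof.
  induction 1; rewrite ?wf_arr, ?wf_later in *; try tauto.
  - repeat split; auto using wf_top.
  - split; auto using wf_unfold.
  - split; auto using wf_mu_close.
  - rewrite wf_arr; tauto.
Qed.

Section EqualitySoundness.
Context {L : lam_alg} {F : frame} {eta : nat -> W F -> V L -> Prop}
  {I : ty -> W F -> V L -> Prop} (HI : interp_spec L F eta I) (Heta : hereditary F eta).

(* Reading [X] as [A] interprets both [C[A/X]] and
   [C[mu X. C/X]]: for the latter, [C] being proper in [X], [A] and [mu X. C] need only agree at
   strictly later worlds, which is the induction hypothesis. *)
Lemma eq_fix_sound X A C : wf A -> wf C -> proper X C = true ->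
  (forall p u, I A p u <-> I (subst X A C) p u) ->
  forall p u, I A p u <-> I (TMu (close X C)) p u.
Proof.
  intros HwA HwC HpC IH p.
  set (M := TMu (close X C)).
  assert (HwM : wf M) by (apply wf_mu_close; auto).
  induction p as [p IHp] using (well_founded_induction (Rplus_converse_wf F)).
  set (eta' := upd eta X (I A)).
  destruct (interp_exists L F eta') as [I' HI'].
  assert (Hother : forall Y, In Y (fv C) -> Y <> X -> forall q, Rstar F p q ->
                   forall u, eta' Y q u <-> eta Y q u).
  { intros Y _ HYX q _ u. unfold eta', upd. rewrite (proj2 (Nat.eqb_neq Y X) HYX). reflexivity. }
  assert (EA : forall u, I (subst X A C) p u <-> I' C p u).
  { apply (interp_subst L F eta I eta' I'); auto.
    intros q _ _ u. unfold eta', upd. rewrite Nat.eqb_refl. reflexivity. }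
  assert (EM : forall u, I (subst X M C) p u <-> I' C p u).
  { apply (interp_subst L F eta I eta' I'); auto.
    intros q _ Hpq u. unfold eta', upd. rewrite Nat.eqb_refl. apply IHp, Hpq; exact HpC. }
  intro u. rewrite IH, EA, <- EM. symmetry. apply (interp_TMu_close HI); auto.
Qed.

(* From right to left: for [R F t r], local linearity gives [r'] with [Rstar F t r'] and
   [R F r' r] all of whose successors are reachable from [r], so the hypothesis at [r']
   yields the conclusion at [r] by heredity. *)
Lemma eq_dist_sound A B : wf A -> wf B ->
  forall p u, I (TLater (TArr A B)) p u <-> I (TArr (TLater A) (TLater B)) p u.
Proof.
  intros HwA HwB p u. assert (HwAB : wf (TArr A B)) by (apply wf_arr; auto).
  rewrite (interp_TLater HI), (interp_TArr HI) by (auto; apply wf_later; auto).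
  split.
  - intros H q Hpq v Hv. rewrite (interp_TLater HI) in Hv |- * by auto.
    intros r Hqr. assert (Hpr : Rplus F p r) by (eapply Rstar_Rplus_trans, t_step; eauto).
    destruct (Rplus_first F p r Hpr) as [q1 [Hpq1 Hq1r]].
    specialize (H q1 Hpq1). rewrite (interp_TArr HI) in H by auto.
    apply H; auto.
  - intros H q Hpq. rewrite (interp_TArr HI) by auto.
    intros r Hqr v Hv.
    assert (Hpr : Rplus F p r) by (eapply Rplus_Rstar_trans; [apply t_step|]; eauto).
    destruct (Rplus_last F p r Hpr) as [t [Hpt Htr]].
    destruct (R_loclin F t r Htr) as [r' [Htr' [Hr'r Hr'succ]]].
    specialize (H r' (rt_trans _ _ _ _ _ Hpt Htr') v).
    rewrite !(interp_TLater HI) in H by auto.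
    apply H; auto. intros s Hr's. apply (interp_Rstar HI Heta r); auto. apply Hr'succ, Hr's.
Qed.

Lemma eqty_sound d A B : eqty d A B -> forall p u, I A p u <-> I B p u.
Proof.
  induction 1 as [A _ | A B _ IH | A B C _ IH1 _ IH2 | A B HAB IH | A B C D HAC IH1 HBD IH2
                 | A HwA | A HwA | X A C HwA HwC HpC _ IH | A B _ HwA HwB]; intros p u.
  - reflexivity.
  - symmetry; apply IH.
  - rewrite IH1; apply IH2.
  - destruct (eqty_wf _ _ _ HAB) as [HwA HwB].
    rewrite !(interp_TLater HI) by auto. split; intros H q Hpq; apply IH; auto.
  - destruct (eqty_wf _ _ _ HAC) as [HwA HwC], (eqty_wf _ _ _ HBD) as [HwB HwD].
    rewrite !(interp_TArr HI) by auto.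
    split; intros H q Hpq v Hv; apply IH2, H, IH1; auto.
  - assert (wf (TArr A top)) by (apply wf_arr; auto using wf_top).
    split; intros _; apply (interp_topv HI); auto using wf_top.
  - apply (interp_TMu HI); exact HwA.
  - apply eq_fix_sound; auto.
  - apply eq_dist_sound; auto.
Qed.

End EqualitySoundness.

Definition sat_assm (F : frame) {T : Type} (eta : nat -> W F -> T -> Prop) (p : W F)
  (g : list (nat * nat)) : Prop :=
  forall X Y, In (X, Y) g -> forall q, Rstar F p q -> forall u, eta X q u -> eta Y q u.

Lemma sat_assm_Rstar F T (eta : nat -> W F -> T -> Prop) p q g :
  Rstar F p q -> sat_assm F eta p g -> sat_assm F eta q g.
Proof. intros Hpq H X Y HXY r Hqr. apply H; auto. eapply rt_trans; eauto. Qed.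

Lemma sat_assm_app F T (eta : nat -> W F -> T -> Prop) p g g1 g2 :
  seteq g (g1 ++ g2) -> sat_assm F eta p g -> sat_assm F eta p g1 /\ sat_assm F eta p g2.
Proof.
  intros Hg H. split; intros X Y HXY; apply H, Hg, in_or_app; auto.
Qed.

Definition sem_sub (g : list (nat * nat)) (A B : ty) : Prop :=
  forall L F eta I, hereditary F eta -> interp_spec L F eta I ->
  forall p, sat_assm F eta p g -> forall u, I A p u -> I B p u.

Lemma sub_wf g A B : sub g A B -> wf A /\ wf B.
Proof.
  induction 1; rewrite ?wf_arr, ?wf_later in *; try tauto.
  - split; reflexivity.
  - split; auto using wf_top.
  - apply (eqty_wf true); assumption.
  - split; apply wf_mu_close; tauto.
Qed.

Lemma in_FTV g X Y : In (X, Y) g -> In X (FTV g) /\ In Y (FTV g).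
Proof. intro H. split; apply in_flat_map; exists (X, Y); simpl; auto. Qed.

(* Induction on worlds.  [X] and [Y] are interpreted as [mu X. A] and [mu Y. B] from the next
   world on; this environment is hereditary, satisfies [X <= Y] by the induction hypothesis,
   and, [A] and [B] being proper, unfolds the two mu-types correctly at the current world. *)
Lemma sub_mu_sound g X Y A B : wf A -> wf B -> X <> Y ->
  ~ In X (FTV g) -> ~ In X (fv B) -> ~ In Y (FTV g) -> ~ In Y (fv A) ->
  proper X A = true -> proper Y B = true ->
  sem_sub ((X, Y) :: g) A B -> sem_sub g (TMu (close X A)) (TMu (close Y B)).
Proof.
  intros HwA HwB HXY HXg HXB HYg HYA HpA HpB IH L F eta I Heta HI p.
  set (MA := TMu (close X A)). set (MB := TMu (close Y B)).
  assert (HwMA : wf MA) by (apply wf_mu_close; auto).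
  assert (HwMB : wf MB) by (apply wf_mu_close; auto).
  induction p as [p IHp] using (well_founded_induction (Rplus_converse_wf F)).
  intros Hg.
  set (eta' := upd (upd eta Y (from_next F (I MB) p)) X (from_next F (I MA) p)).
  assert (Heta' : hereditary F eta').
  { repeat apply hereditary_upd; auto; intros; eapply from_next_R; eauto. }
  assert (HX : forall u q, eta' X q u = from_next F (I MA) p q u).
  { intros. unfold eta', upd. rewrite Nat.eqb_refl. reflexivity. }
  assert (HY : forall u q, eta' Y q u = from_next F (I MB) p q u).
  { intros. unfold eta', upd. rewrite (proj2 (Nat.eqb_neq Y X)), Nat.eqb_refl; auto. }
  assert (Hother : forall Z q u, Z <> X -> Z <> Y -> eta' Z q u = eta Z q u).
  { intros Z q u HZX HZY. unfold eta', upd.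
    rewrite (proj2 (Nat.eqb_neq Z X)), (proj2 (Nat.eqb_neq Z Y)); auto. }
  destruct (interp_exists L F eta') as [I' HI'].
  assert (Hg' : sat_assm F eta' p ((X, Y) :: g)).
  { intros X0 Y0 [[= <- <-] | Hin] q Hpq u.
    - rewrite HX, HY. intros H r Hqr Hpr.
      apply (IHp r Hpr); [eapply sat_assm_Rstar; [apply Rplus_Rstar|]; eauto | apply H; auto].
    - destruct (in_FTV _ _ _ Hin).
      rewrite !Hother by (intros ->; contradiction). apply Hg; auto. }
  assert (EA : forall u, I MA p u <-> I' A p u).
  { intro u. unfold MA at 1. rewrite (interp_TMu_close HI) by auto.
    apply (interp_subst L F eta I eta' I'); auto.
    - intros Z HZ HZX q _ v. rewrite Hother; [reflexivity | auto | intros ->; contradiction].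
    - intros q _ Hpq v. rewrite HX. apply (from_next_interp HI Heta); auto. }
  assert (EB : forall u, I MB p u <-> I' B p u).
  { intro u. unfold MB at 1. rewrite (interp_TMu_close HI) by auto.
    apply (interp_subst L F eta I eta' I'); auto.
    - intros Z HZ HZY q _ v. rewrite Hother; [reflexivity | intros ->; contradiction | auto].
    - intros q _ Hpq v. rewrite HY. apply (from_next_interp HI Heta); auto. }
  intros u Hu. apply EB, (IH L F eta' I' Heta' HI' p Hg'), EA, Hu.
Qed.

Lemma sub_sound g A B : sub g A B -> sem_sub g A B.
Proof.
  induction 1 as [g X Y _ HXY | g A _ HwA | g A B _ HAB | g g1 g2 A B C _ IH1 _ IH2 Hg _
                 | g A B HAB IH | g g1 g2 A A' B B' HA IH1 HB IH2 Hg _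
                 | g g' X Y A B HAB IH Hg' Hwf' HXg HXB HYg HYA HpA HpB | g A _ HwA];
    intros L F eta I Heta HI p Hsat u Hu.
  - apply (interp_TFree HI) in Hu. apply (interp_TFree HI), (Hsat X Y); auto. apply rt_refl.
  - apply (interp_topv HI); auto using wf_top.
  - apply (eqty_sound HI Heta _ _ _ HAB), Hu.
  - destruct (sat_assm_app _ _ _ _ _ _ _ Hg Hsat). eapply IH2, IH1; eauto.
  - destruct (sub_wf _ _ _ HAB).
    rewrite (interp_TLater HI) in Hu |- * by auto. intros q Hpq.
    apply (IH L F eta I Heta HI q); auto. eapply sat_assm_Rstar, Hsat. apply rt_step, Hpq.
  - destruct (sub_wf _ _ _ HA), (sub_wf _ _ _ HB), (sat_assm_app _ _ _ _ _ _ _ Hg Hsat).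
    rewrite (interp_TArr HI) in Hu |- * by auto. intros q Hpq v Hv.
    apply (IH2 L F eta I Heta HI q); [eapply sat_assm_Rstar; eauto|].
    apply Hu, (IH1 L F eta I Heta HI q); auto. eapply sat_assm_Rstar; eauto.
  - destruct (sub_wf _ _ _ HAB) as [HwA HwB].
    assert (HXY : X <> Y) by (apply (proj1 Hwf'), Hg'; left; reflexivity).
    assert (IH' : sem_sub ((X, Y) :: g) A B).
    { intros L' F' eta' I' Heta' HI' p' Hsat'. apply (IH L' F' eta' I' Heta' HI' p').
      intros X0 Y0 Hin. apply Hsat', Hg', Hin. }
    exact (sub_mu_sound g X Y A B HwA HwB HXY HXg HXB HYg HYA HpA HpB IH'
             L F eta I Heta HI p Hsat u Hu).
  - rewrite (interp_TLater HI) by auto. intros q Hpq. eapply (interp_R HI Heta); eauto.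
Qed.

(** * Soundness of typing *)

Section RootExtension.
Variables (F : frame) (p0 : W F).

Definition root_R (a b : option (W F)) : Prop :=
  match a, b with
  | Some a, Some b => R F a b
  | None, Some b => b = p0
  | _, _ => False
  end.

Lemma root_R_Rstar a b : Rstar F a b -> clos_refl_trans _ root_R (Some a) (Some b).
Proof. induction 1; [apply rt_step | apply rt_refl | eapply rt_trans]; eauto. Qed.

Lemma root_R_no_chain : ~ exists f : nat -> option (W F), forall n, root_R (f n) (f (S n)).
Proof.
  intros [f Hf].
  assert (Hsome : forall n, exists a, f (S n) = Some a).
  { intro n. specialize (Hf n). destruct (f n), (f (S n)); simpl in Hf; try contradiction; eauto. }
  apply (R_wf F). exists (fun n => match f (S n) with Some a => a | None => p0 end).
  intro n. specialize (Hf (S n)).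
  destruct (Hsome n) as [a Ha], (Hsome (S n)) as [b Hb]. rewrite Ha, Hb in *. exact Hf.
Qed.

Lemma root_R_loclin p q : root_R p q ->
  exists r, clos_refl_trans _ root_R p r /\ root_R r q /\
    (forall s, root_R r s -> clos_refl_trans _ root_R q s).
Proof.
  destruct p as [a|], q as [b|]; simpl; intro Hpq; try contradiction.
  - destruct (R_loclin F a b Hpq) as [r [Har [Hrb Hr]]].
    exists (Some r). split; [apply root_R_Rstar, Har | split; [exact Hrb|]].
    intros [s|] Hs; simpl in Hs; [apply root_R_Rstar, Hr, Hs | contradiction].
  - subst b. exists None. split; [apply rt_refl | split; [reflexivity|]].
    intros [s|] Hs; simpl in Hs; [subst; apply rt_refl | contradiction].
Qed.

Definition root_frame : frame :=
  {| W := option (W F); W_ne := inhabits None; R := root_R;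
     R_wf := root_R_no_chain; R_loclin := root_R_loclin |}.

End RootExtension.

Definition sem_typ (G : ctx) (M : tm) (A : ty) : Prop :=
  forall L F eta I, hereditary F eta -> interp_spec L F eta I ->
  forall p rho, (forall x B, In (x, B) G -> I B p (rho x)) -> I A p (den L M rho).

Lemma typ_lct_wf G M A : typ G M A -> lct M /\ wf A.
Proof.
  induction 1 as [G x A HG Hx | | G M HG HM | G M A B _ [HM HA] HAB | G G' x M A B _ [HM HB] HG' HwG'
                 | G G1 G2 M N A B _ [HM HAB] _ [HN HA] _ _].
  - split; [reflexivity | apply (proj2 HG x A Hx)].
  - tauto.
  - split; [exact HM | exact wf_top].
  - split; [exact HM | apply (sub_wf _ _ _ HAB)].
  - split; [apply lct_rec_closet_rec, HM|]. apply wf_arr; split; auto.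
    apply (proj2 HwG' x A), HG'; left; reflexivity.
  - split; [apply andb_true_iff; auto | apply wf_arr in HAB; tauto].
Qed.

(* The world [None] of [root_frame F p] sees exactly [Some p], and [Some] transports [I]; so
   [I (TLater A)] at [None] is [I A] at [p]. *)
Lemma shift_sound G G' M A : wfc G -> seteq G' (later_ctx G) -> wf A ->
  sem_typ G' M (TLater A) -> sem_typ G M A.
Proof.
  intros HG HG' HwA IH L F eta I Heta HI p rho Hrho.
  set (eta' := fun X (o : option (W F)) u => match o with Some q => eta X q u | None => eta X p u end).
  assert (Heta' : hereditary (root_frame F p) eta').
  { intros X [a|] [b|] u Hab; simpl in Hab; try contradiction; simpl.
    - apply Heta, Hab.
    - subst; auto. }
  destruct (interp_exists L (root_frame F p) eta') as [I' HI'].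
  assert (HSome : forall B q u, wf B -> I B q u <-> I' B (Some q) u).
  { intros B q u HwB. rewrite <- (msubst_TFree B) at 1.
    apply (interp_msubst_agree L F (root_frame F p) Some (fun _ _ H => H)
             (fun a b' => match b' with
                          | Some b => fun H => ex_intro _ b (conj H Logic.eq_refl)
                          | None => fun H => False_ind _ H end)
             eta I HI eta' I' HI' TFree (fun _ => Logic.eq_refl) q B HwB (fun _ => False));
      [tauto|].
    intros Y _ r _ _ v. symmetry; apply (interp_TFree HI). }
  assert (HNone : forall B u, wf B -> I' (TLater B) None u <-> I B p u).
  { intros B u HwB. rewrite (interp_TLater HI') by exact HwB. split.
    - intro H. apply HSome, H; auto. reflexivity.
    - intros H [q|] Hq; simpl in Hq; [subst; apply HSome; auto | contradiction]. }
  apply HNone; auto. apply (IH L (root_frame F p) eta' I' Heta' HI' None rho).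
  intros x B Hin. apply HG' in Hin. apply in_map_iff in Hin as [[y C] [Heq Hin]].
  injection Heq as -> <-. apply HNone; [apply (proj2 HG x C Hin) | apply Hrho, Hin].
Qed.

Lemma abs_sound G G' x M A B : lct M -> wf B -> wfc G' -> seteq G' ((x, A) :: G) ->
  sem_typ G' M B -> sem_typ G (Lam (closet x M)) (TArr A B).
Proof.
  intros HM HwB HwG' HG' IH L F eta I Heta HI p rho Hrho.
  assert (HxA : In (x, A) G') by (apply HG'; left; reflexivity).
  rewrite (interp_TArr HI) by (auto; apply (proj2 HwG' x A HxA)).
  intros q Hpq v Hv. rewrite den_lam by exact HM.
  apply (IH L F eta I Heta HI q). intros y C Hin. unfold upd.
  destruct (Nat.eqb_spec y x) as [->|Hyx].
  - rewrite (proj1 HwG' x C A Hin HxA). exact Hv.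
  - apply HG' in Hin as [[= -> _] | Hin]; [contradiction|].
    apply (interp_Rstar HI Heta p); auto.
    apply (proj2 HwG' y C), HG'; right; exact Hin.
Qed.

Lemma app_sound G G1 G2 M N A B : lct M -> lct N -> wf A -> wf B -> seteq G (G1 ++ G2) ->
  sem_typ G1 M (TArr A B) -> sem_typ G2 N A -> sem_typ G (App M N) B.
Proof.
  intros HM HN HwA HwB HG IHM IHN L F eta I Heta HI p rho Hrho.
  rewrite den_app by auto.
  assert (HrhoG : forall G', incl G' (G1 ++ G2) -> forall x C, In (x, C) G' -> I C p (rho x)).
  { intros G' Hincl x C Hin. apply Hrho, HG, Hincl, Hin. }
  pose proof (IHM L F eta I Heta HI p rho) as HMp.
  rewrite (interp_TArr HI) in HMp by auto.
  apply HMp; [apply HrhoG, incl_appl, incl_refl | apply rt_refl |].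
  apply (IHN L F eta I Heta HI p rho), HrhoG, incl_appr, incl_refl.
Qed.

Lemma typ_sound G M A : typ G M A -> sem_typ G M A.
Proof.
  intro H. induction H as [G x A HG Hx | G G' M A HM IH HG' HG | G M HG HM | G M A B HM IH HAB
                          | G G' x M A B HM IH HG' HwG' | G G1 G2 M N A B HM IHM HN IHN HG HwG].
  - intros L F eta I Heta HI p rho Hrho. rewrite den_var. apply Hrho, Hx.
  - destruct (typ_lct_wf _ _ _ HM) as [_ HwA].
    apply (shift_sound G G'); auto.
  - intros L F eta I Heta HI p rho Hrho. apply (interp_topv HI); [exact wf_top | reflexivity].
  - intros L F eta I Heta HI p rho Hrho.
    apply (sub_sound _ _ _ HAB L F eta I Heta HI p); [intros ? ? [] | apply (IH L F eta I Heta HI p rho Hrho)].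
  - destruct (typ_lct_wf _ _ _ HM). apply (abs_sound G G'); auto.
  - destruct (typ_lct_wf _ _ _ HM) as [HlM HwAB], (typ_lct_wf _ _ _ HN) as [HlN HwA].
    apply wf_arr in HwAB as [_ HwB]. apply (app_sound G G1 G2 M N A B); auto.
Qed.

Theorem theorem7 :
  forall (G : ctx) (M : tm) (B : ty), typ G M B ->
  forall (L : lam_alg) (F : frame) (eta : nat -> W F -> V L -> Prop)
         (I : ty -> W F -> V L -> Prop),
    hereditary F eta -> interp_spec L F eta I ->
    forall (p : W F) (rho : nat -> V L),
      (forall x A, In (x, A) G -> I A p (rho x)) ->
      I B p (den L M rho).
Proof.
  intros G M B H. exact (typ_sound G M B H).
Qed.
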